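(* Let $\rho>1$ and let $\mathbf{p}=(p_1,\ldots,p_n)$ be a probability distribution with $p_1\geq\cdots\geq p_n>0$ and $p_1/p_n\leq\rho$. Then $$\log_2 n-H(\mathbf{z}_\rho(\mathbf{p}))\leq\left(\frac{\rho\ln\rho}{\rho-1}-1-\ln\frac{\rho\ln\rho}{\rho-1}\right)\frac{1}{\ln 2}.$$
   Context: $H$ is Shannon entropy in bits and $\ln$ is the natural logarithm. Let $i=\left\lfloor\frac{1-np_n}{p_n(\rho-1)}\right\rfloor$. Define $\mathbf{z}_\rho(\mathbf{p})$ as the length-$n$ vector whose first $i$ entries equal $\rho p_n$, whose next entry equals $1-(n+i\rho-i-1)p_n$, and whose remaining $n-i-1$ entries equal $p_n$. *)

From Stdlib Require Export Reals Lra Lia ZArith List.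
Export ListNotations.
Open Scope R_scope.

Definition rsum (n : nat) (f : nat -> R) : R :=
  fold_right Rplus 0 (map f (seq 0 n)).

Definition log2 (x : R) : R := ln x / ln 2.

Definition entropy (n : nat) (v : nat -> R) : R :=
  rsum n (fun k => if Rlt_dec 0 (v k) then - (v k * log2 (v k)) else 0).

(* Vectors are 0-indexed: p k stands for p_{k+1}; p (n-1) is p_n. *)
Definition z_index (rho : R) (n : nat) (p : nat -> R) : Z :=
  Int_part ((1 - INR n * p (n - 1)%nat) / (p (n - 1)%nat * (rho - 1))).

Definition z_rho (rho : R) (n : nat) (p : nat -> R) (k : nat) : R :=
  let pn := p (n - 1)%nat in
  let i := z_index rho n p in
  if Z.ltb (Z.of_nat k) i then rho * pn
  else if Z.eqb (Z.of_nat k) i then 1 - (INR n + IZR i * rho - IZR i - 1) * pn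
  else pn.

(* With [q = p_n] and [t = rho ln rho / (rho - 1)], every entry [z] of
   [z_rho(p)] lies in [[q, rho q]], and convexity of [y ln y] on [[1, rho]]
   gives the chord bound [z ln z <= z ln q + (z - q) t].  Summing over the
   entries, which add up to 1, yields [ln n - H ln 2 <= ln (n q) + t - n q t],
   and [ln x <= x - 1] at [x = n q t] turns the right-hand side into
   [t - 1 - ln t]. *)

From Stdlib Require Import Reals Lra Lia.
Open Scope R_scope.

Lemma rsum_0 (f : nat -> R) : rsum 0 f = 0.
Proof. reflexivity. Qed.

Lemma rsum_S (n : nat) (f : nat -> R) : rsum (S n) f = rsum n f + f n.
Proof.
  unfold rsum. rewrite seq_S, map_app, fold_right_app. simpl.
  generalize (f n). induction (map f (seq 0 n)) as [|a l IH]; intro r; simpl.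
  - ring.
  - rewrite IH. ring.
Qed.

Lemma rsum_le (n : nat) (f g : nat -> R) :
  (forall k, (k < n)%nat -> f k <= g k) -> rsum n f <= rsum n g.
Proof.
  induction n as [|n IH]; intro Hfg.
  - rewrite !rsum_0; lra.
  - rewrite !rsum_S.
    assert (f n <= g n) by (apply Hfg; lia).
    assert (rsum n f <= rsum n g) by (apply IH; intros; apply Hfg; lia).
    lra.
Qed.

Lemma rsum_ext (n : nat) (f g : nat -> R) :
  (forall k, (k < n)%nat -> f k = g k) -> rsum n f = rsum n g.
Proof.
  intro Hfg; apply Rle_antisym; apply rsum_le; intros k Hk; rewrite (Hfg k Hk); lra.
Qed.

Lemma rsum_const (n : nat) (c : R) : rsum n (fun _ => c) = INR n * c.
Proof.
  induction n as [|n IH]; [rewrite rsum_0; simpl; ring|].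
  rewrite rsum_S, IH, S_INR; ring.
Qed.

Lemma rsum_scal (n : nat) (a : R) (f : nat -> R) :
  rsum n (fun k => a * f k) = a * rsum n f.
Proof.
  induction n as [|n IH]; [rewrite !rsum_0; ring|].
  rewrite !rsum_S, IH; ring.
Qed.

Lemma rsum_plus (n : nat) (f g : nat -> R) :
  rsum n (fun k => f k + g k) = rsum n f + rsum n g.
Proof.
  induction n as [|n IH]; [rewrite !rsum_0; ring|].
  rewrite !rsum_S, IH; ring.
Qed.

Lemma rsum_add (m d : nat) (f : nat -> R) :
  rsum (m + d) f = rsum m f + rsum d (fun k => f (m + k)%nat).
Proof.
  induction d as [|d IH].
  - rewrite Nat.add_0_r, rsum_0; ring.
  - rewrite Nat.add_succ_r, !rsum_S, IH; ring.
Qed.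

Lemma rsum_piecewise (a b c : R) (j N : nat) (f : nat -> R) :
  (j < N)%nat ->
  (forall k, (k < N)%nat ->
     f k = if Nat.ltb k j then a else if Nat.eqb k j then b else c) ->
  rsum N f = INR j * a + b + INR (N - j - 1) * c.
Proof.
  intros HjN Hf.
  replace N with (S j + (N - j - 1))%nat at 1 by lia.
  rewrite rsum_add, rsum_S.
  rewrite (rsum_ext j f (fun _ => a)), rsum_const; cycle 1.
  { intros k Hk. rewrite Hf by lia.
    destruct (Nat.ltb_spec k j); [reflexivity | lia]. }
  rewrite (rsum_ext _ _ (fun _ => c)), rsum_const; cycle 1.
  { intros k Hk. rewrite Hf by lia.
    destruct (Nat.ltb_spec (S j + k) j); [lia|].
    destruct (Nat.eqb_spec (S j + k) j); [lia | reflexivity]. }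
  rewrite Hf by lia. rewrite Nat.ltb_irrefl, Nat.eqb_refl. ring.
Qed.

Lemma antitone_le (n : nat) (f : nat -> R) :
  (forall k, (S k < n)%nat -> f (S k) <= f k) ->
  forall k l, (k <= l)%nat -> (l < n)%nat -> f l <= f k.
Proof.
  intros Hmono k l Hkl. induction Hkl as [|l Hkl IH]; intro Hl.
  - lra.
  - assert (f (S l) <= f l) by (apply Hmono; lia).
    assert (f l <= f k) by (apply IH; lia).
    lra.
Qed.

Lemma ln_le_sub1 (x : R) : 0 < x -> ln x <= x - 1.
Proof.
  intro Hx. pose proof (exp_ineq1_le (ln x)) as H. rewrite exp_ln in H by exact Hx. lra.
Qed.

Lemma ln_pos (x : R) : 1 < x -> 0 < ln x.
Proof. intro Hx. rewrite <- ln_1. apply ln_increasing; lra. Qed.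

Lemma xlnx_le_chord (rho y : R) : 1 < rho -> 1 <= y <= rho ->
  y * ln y <= (y - 1) * (rho * ln rho / (rho - 1)).
Proof.
  intros Hrho [Hy1 Hyr].
  assert (Htan1 : ln y <= y - 1) by (apply ln_le_sub1; lra).
  assert (Htanr : rho * ln y <= rho * ln rho + y - rho).
  { assert (H : ln (y / rho) <= y / rho - 1) by (apply ln_le_sub1, Rdiv_lt_0_compat; lra).
    unfold Rdiv in H. rewrite ln_mult, ln_Rinv in H by (try apply Rinv_0_lt_compat; lra).
    apply Rmult_le_compat_l with (r := rho) in H; [|lra].
    replace (rho * (y * / rho - 1)) with (y - rho) in H by (field; lra).
    lra. }
  (* The tangent bounds at 1 and at rho, weighted by rho - y and y - 1, add up
     to (rho - 1) y ln y on the left. *)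
  assert (H1 : (rho - y) * ln y <= (rho - y) * (y - 1)) by (apply Rmult_le_compat_l; lra).
  assert (H2 : (y - 1) * (rho * ln y) <= (y - 1) * (rho * ln rho + y - rho))
    by (apply Rmult_le_compat_l; lra).
  apply Rmult_le_reg_r with (rho - 1); [lra|].
  replace ((y - 1) * (rho * ln rho / (rho - 1)) * (rho - 1))
    with ((y - 1) * (rho * ln rho)) by (field; lra).
  nra.
Qed.

Lemma xlnx_le_scaled_chord (rho q z : R) : 1 < rho -> 0 < q -> q <= z <= rho * q ->
  z * ln z <= z * ln q + (z - q) * (rho * ln rho / (rho - 1)).
Proof.
  intros Hrho Hq [Hz1 Hz2].
  assert (Hy : 1 <= z / q <= rho).
  { split; [apply Rmult_le_reg_r with q | apply Rmult_le_reg_r with q];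
      try lra; field_simplify; lra. }
  pose proof (xlnx_le_chord rho (z / q) Hrho Hy) as H.
  apply Rmult_le_compat_l with (r := q) in H; [|lra].
  replace z with (q * (z / q)) at 1 2 by (field; lra).
  rewrite ln_mult by (try apply Rdiv_lt_0_compat; lra).
  replace (q * (z / q * ln (z / q))) with (z * ln (z / q)) in H by (field; lra).
  replace (q * ((z / q - 1) * (rho * ln rho / (rho - 1))))
    with ((z - q) * (rho * ln rho / (rho - 1))) in H by (field; lra).
  replace (q * (z / q)) with z by (field; lra).
  lra.
Qed.

Lemma entropy_pos_eq (n : nat) (v : nat -> R) : (forall k, (k < n)%nat -> 0 < v k) ->
  entropy n v = - / ln 2 * rsum n (fun k => v k * ln (v k)).
Proof.
  intro Hv. pose proof (ln_pos 2 ltac:(lra)).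
  unfold entropy. rewrite <- rsum_scal. apply rsum_ext. intros k Hk.
  destruct (Rlt_dec 0 (v k)) as [_|Hn]; [|specialize (Hv k Hk); lra].
  unfold log2. field. lra.
Qed.

Lemma log2_sub_entropy_le (rho q : R) (n : nat) (v : nat -> R) :
  1 < rho -> 0 < q ->
  (forall k, (k < n)%nat -> q <= v k <= rho * q) ->
  rsum n v = 1 ->
  log2 (INR n) - entropy n v
  <= (rho * ln rho / (rho - 1) - 1 - ln (rho * ln rho / (rho - 1))) * / ln 2.
Proof.
  intros Hrho Hq Hv Hsum.
  set (t := rho * ln rho / (rho - 1)).
  assert (Ht : 0 < t).
  { apply Rdiv_lt_0_compat; [apply Rmult_lt_0_compat|]; try apply ln_pos; lra. }
  assert (Hln2 : 0 < ln 2) by (apply ln_pos; lra).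
  assert (Hn : 0 < INR n).
  { destruct n; [rewrite rsum_0 in Hsum; lra|].
    apply lt_0_INR; lia. }
  assert (Hsum_xlnx : rsum n (fun k => v k * ln (v k)) <= ln q + t - INR n * q * t).
  { apply Rle_trans with (rsum n (fun k => (ln q + t) * v k + - (q * t))).
    - apply rsum_le. intros k Hk.
      pose proof (xlnx_le_scaled_chord rho q (v k) Hrho Hq (Hv k Hk)). fold t in H. lra.
    - rewrite rsum_plus, rsum_scal, rsum_const, Hsum. lra. }
  assert (Hnqt : ln (INR n * q * t) <= INR n * q * t - 1).
  { apply ln_le_sub1. apply Rmult_lt_0_compat; [apply Rmult_lt_0_compat|]; lra. }
  rewrite !ln_mult in Hnqt by (first [lra | apply Rmult_lt_0_compat; lra]).
  rewrite entropy_pos_eq by (intros k Hk; destruct (Hv k Hk); lra).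
  unfold log2.
  replace (ln (INR n) / ln 2 - - / ln 2 * rsum n (fun k => v k * ln (v k)))
    with ((ln (INR n) + rsum n (fun k => v k * ln (v k))) * / ln 2) by (field; lra).
  apply Rmult_le_compat_r; [left; apply Rinv_0_lt_compat; lra | lra].
Qed.

Section ZRho.

Variables (rho : R) (n : nat) (p : nat -> R).
Let q := p (n - 1)%nat.
Hypothesis Hrho : 1 < rho.
Hypothesis Hpos : 0 < q.
Hypothesis Hnq : INR n * q <= 1.
Hypothesis Hq_rho : 1 <= q + (INR n - 1) * rho * q.

Let X := (1 - INR n * q) / (q * (rho - 1)).
Let j := Z.to_nat (Int_part X).

Lemma X_mul_step : X * (q * (rho - 1)) = 1 - INR n * q.
Proof. unfold X; field; lra. Qed.

Lemma z_index_eq : z_index rho n p = Z.of_nat j /\ INR j <= X < INR j + 1.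
Proof.
  assert (HX0 : 0 <= X).
  { apply Rmult_le_reg_r with (q * (rho - 1)); [apply Rmult_lt_0_compat; lra|].
    rewrite X_mul_step; lra. }
  destruct (base_Int_part X) as [Hi1 Hi2].
  assert (Hi0 : (0 <= Int_part X)%Z).
  { assert (Hlt : IZR (-1) < IZR (Int_part X)) by lra. apply lt_IZR in Hlt. lia. }
  assert (Hij : Int_part X = Z.of_nat j) by (unfold j; rewrite Z2Nat.id; lia).
  split; [exact Hij | rewrite INR_IZR_INZ, <- Hij; lra].
Qed.

Lemma z_index_nat_lt : (j < n)%nat.
Proof.
  destruct z_index_eq as [_ [Hj _]].
  assert (X <= INR n - 1).
  { apply Rmult_le_reg_r with (q * (rho - 1)); [apply Rmult_lt_0_compat; lra|].
    rewrite X_mul_step; nra. }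
  apply INR_lt. lra.
Qed.

Let b := 1 - (INR n + INR j * rho - INR j - 1) * q.

Lemma z_rho_piecewise (k : nat) :
  z_rho rho n p k = if Nat.ltb k j then rho * q else if Nat.eqb k j then b else q.
Proof.
  destruct z_index_eq as [Hidx _].
  unfold z_rho, b. fold q. rewrite Hidx, <- INR_IZR_INZ.
  destruct (Z.ltb_spec (Z.of_nat k) (Z.of_nat j)), (Nat.ltb_spec k j); try lia;
  destruct (Z.eqb_spec (Z.of_nat k) (Z.of_nat j)), (Nat.eqb_spec k j); try lia;
  reflexivity.
Qed.

(* The middle entry [b] stays in [[q, rho q]] precisely because
   [j <= X < j + 1], i.e. because [j] is the floor of [X]. *)
Lemma z_rho_bounds (k : nat) : q <= z_rho rho n p k <= rho * q.
Proof.
  destruct z_index_eq as [_ [Hj1 Hj2]].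
  pose proof X_mul_step.
  assert (0 < q * (rho - 1)) by (apply Rmult_lt_0_compat; lra).
  rewrite z_rho_piecewise.
  destruct (Nat.ltb k j); [|destruct (Nat.eqb k j)]; unfold b in *; nra.
Qed.

Lemma rsum_z_rho : rsum n (z_rho rho n p) = 1.
Proof.
  pose proof z_index_nat_lt.
  rewrite (rsum_piecewise (rho * q) b q j n) by (intros; apply z_rho_piecewise || lia).
  unfold b. rewrite !minus_INR by lia. simpl. ring.
Qed.

End ZRho.

Theorem lemma7 (rho : R) (n : nat) (p : nat -> R)
  (Hrho : 1 < rho)
  (Hn : (1 <= n)%nat)
  (Hsum : rsum n p = 1)
  (Hmono : forall k : nat, (S k < n)%nat -> p (S k) <= p k)
  (Hpos : 0 < p (n - 1)%nat)
  (Hratio : p 0%nat / p (n - 1)%nat <= rho) :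
  log2 (INR n) - entropy n (z_rho rho n p)
  <= (rho * ln rho / (rho - 1) - 1 - ln (rho * ln rho / (rho - 1))) * / ln 2.
Proof.
  set (q := p (n - 1)%nat) in *.
  assert (Hp0 : p 0%nat <= rho * q).
  { apply Rmult_le_reg_r with (/ q); [apply Rinv_0_lt_compat; lra|].
    replace (rho * q * / q) with rho by (field; lra). exact Hratio. }
  assert (Hnq : INR n * q <= 1).
  { rewrite <- Hsum, <- rsum_const. apply rsum_le. intros k Hk.
    apply (antitone_le n p Hmono); lia. }
  assert (Hq_rho : 1 <= q + (INR n - 1) * rho * q).
  { replace n with (S (n - 1)) in Hsum at 1 by lia.
    rewrite rsum_S in Hsum. fold q in Hsum.
    assert (rsum (n - 1) p <= rsum (n - 1) (fun _ => rho * q)).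
    { apply rsum_le. intros k Hk.
      assert (p k <= p 0%nat) by (apply (antitone_le n p Hmono); lia). lra. }
    rewrite rsum_const, minus_INR in H by lia. simpl in H. lra. }
  apply (log2_sub_entropy_le rho q); [exact Hrho | exact Hpos | | ].
  - intros k _. apply z_rho_bounds; assumption.
  - apply rsum_z_rho; assumption.
Qed.
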